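(* Let $n\ge 2$ and let $v_1,\ldots,v_n$ be positive integers all less than or equal to $1.5n+1$. Then one of the following holds: $\mathrm{ML}(v_1,\ldots,v_n)<\frac{1}{n+1}$; or $\mathrm{ML}(v_1,\ldots,v_n)=\frac{s}{ns+1}$ for some integer $1\le s\le 3$; or $\mathrm{ML}(v_1,\ldots,v_n)\ge\frac1n$.
   Context: For a real number $x$, $\Vert x\Vert$ denotes the distance from $x$ to the nearest integer. For positive integers $v_1,\ldots,v_n$, the maximum loneliness is $\mathrm{ML}(v_1,\ldots,v_n)=\max_{t\in\mathbb{R}}\min_{1\le i\le n}\Vert t v_i\Vert$. *)

From HB Require Import structures.
From mathcomp Require Import all_boot all_order all_algebra.
From mathcomp Require Import all_classical all_reals.
Set Implicit Arguments. Unset Strict Implicit. Unset Printing Implicit Defensive.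
Import Order.TTheory GRing.Theory Num.Theory.
Local Open Scope ring_scope.
Local Open Scope classical_set_scope.

Definition dist_int {R : realType} (x : R) : R :=
  Num.min (x - (Num.floor x)%:~R) ((Num.ceil x)%:~R - x).

(* min_{1<=i<=n} ||t v_i||  (the neutral element 1 is never reached since n>=1
   and ||.|| <= 1/2) *)
Definition min_dist {R : realType} (n : nat) (v : 'I_n -> nat) (t : R) : R :=
  \big[Num.min/1]_(i < n) dist_int (t * (v i)%:R).

(* ML(v_1,...,v_n) = max_t min_i ||t v_i||, written as the supremum over t
   (the maximum is attained, so the two coincide). *)
Definition ML {R : realType} (n : nat) (v : 'I_n -> nat) : R :=
  sup (range (@min_dist R n v)).

From HB Require Import structures.
From mathcomp Require Import all_boot all_order all_algebra.
From mathcomp Require Import all_classical all_reals.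
From mathcomp Require Import topology normedtype derive.
From mathcomp Require Import zify ring lra.
Import Order.TTheory GRing.Theory Num.Theory.
Import numFieldNormedType.Exports.
Local Open Scope ring_scope.

(* ML is attained at some c, since min_dist is continuous and 1-periodic. If
   M = min_dist c lies in (0, 1/2), then c is pinned from both sides: some
   v_i has c v_i = a - M and some v_j has c v_j = b + M with a, b integers,
   for otherwise moving c slightly to one side would increase every ||t v_i||
   above M. Then v_i <> v_j (else 2M would be an integer) and
   M (v_i + v_j) = a v_j - b v_i, so M = k / D with D = v_i + v_j <= 3n + 1.
   In the window 1/(n+1) <= k/D < 1/n this leaves only nk < D <= (n+1)k,
   i.e. k/D is 1/(n+1), 2/(2n+1), 2/(2n+2) or 3/(3n+1). *)

Section DistInt.
Context {R : realType}.
Implicit Types (x y M s : R) (z : int).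

Lemma dist_int_le_norm x z : dist_int x <= `|x - z%:~R|.
Proof.
have fx := floor_le x; have cx := ceil_ge x.
have cf : Num.ceil x <= Num.floor x + 1.
  by rewrite ceil_floor lerD2l; case: (x \is a Num.int).
rewrite /dist_int ge_min; apply/orP; have [zf|fz] := leP z (Num.floor x).
- have : (z%:~R : R) <= (Num.floor x)%:~R by rewrite ler_int.
  by left; rewrite ger0_norm; lra.
- have : Num.ceil x <= z by lia.
  by rewrite -(ler_int R); right; rewrite ler0_norm; lra.
Qed.

Lemma dist_int_attained x : exists z, dist_int x = `|x - z%:~R|.
Proof.
have fx := floor_le x; have cx := ceil_ge x; rewrite /dist_int.
have [_|_] := leP (x - (Num.floor x)%:~R) ((Num.ceil x)%:~R - x).
- by exists (Num.floor x); rewrite ger0_norm //; lra.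
- by exists (Num.ceil x); rewrite ler0_norm; lra.
Qed.

Lemma dist_int_lipschitz x y : `|dist_int x - dist_int y| <= `|x - y|.
Proof.
suff le_dist (a b : R) : dist_int b <= dist_int a + `|a - b|.
  by have := le_dist x y; have := le_dist y x; rewrite ler_norml (distrC y); lra.
have [z ->] := dist_int_attained a.
apply: le_trans (dist_int_le_norm b z) _.
have -> : b - z%:~R = (a - z%:~R) + (b - a) by ring.
by rewrite (distrC a b) ler_normD.
Qed.

Lemma dist_intDz x z : dist_int (x + z%:~R) = dist_int x.
Proof.
apply/eqP; rewrite eq_le; apply/andP; split.
- have [w ->] := dist_int_attained x.
  by have := dist_int_le_norm (x + z%:~R) (w + z); rewrite intrD opprD addrACA subrr addr0.
- have [w ->] := dist_int_attained (x + z%:~R).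
  by have := dist_int_le_norm x (w - z); rewrite intrB opprB -addrA.
Qed.

Lemma dist_int_norm_le_half x z : `|x - z%:~R| <= 1/2 -> dist_int x = `|x - z%:~R|.
Proof.
move=> xz; apply/eqP; rewrite eq_le dist_int_le_norm /=.
have [w ->] := dist_int_attained x.
have [-> //|wz] := eqVneq w z.
have zw1 : (1 : R) <= `|(z - w)%:~R|.
  by rewrite -intr_norm (ler_int R 1); move: wz; rewrite eq_sym -subr_eq0; lia.
have := ler_normD (x - w%:~R) (- (x - z%:~R)).
have -> : x - w%:~R + - (x - z%:~R) = (z - w)%:~R by rewrite intrB; ring.
by rewrite normrN; lra.
Qed.

Lemma dist_int_push x M s : s = 1 \/ s = -1 -> 0 < M -> M < 1/2 ->
  M <= dist_int x -> (forall z, x != z%:~R - s * M) ->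
  exists2 d, 0 < d & forall e, 0 < e -> e <= d -> M < dist_int (x + s * e).
Proof.
move=> s1 M0 M2 Mx xP; have ns : `|s| = 1 by case: s1 => ->; rewrite ?normrN normr1.
have [z xz] := dist_int_attained x.
have [Mlt|xM] := ltP M (dist_int x).
  exists ((dist_int x - M) / 2) => [|e e0 ed]; first by apply: divr_gt0; lra.
  have := dist_int_lipschitz x (x + s * e).
  by rewrite opprD addNKr normrN normrM ns mul1r gtr0_norm // ler_norml; lra.
have xzs : x - z%:~R = s * M.
  have xM' : dist_int x = M by apply/eqP; rewrite eq_le xM Mx.
  move: xz (xP z); rewrite xM'; case: s1 => -> xz /eqP xP';
    case: (ler0P (x - z%:~R)) xz => xz0; rewrite ?ler0_norm ?gtr0_norm // => xz;
    first [lra | by exfalso; apply: xP'; lra].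
exists (1/2 - M) => [|e e0 ed]; first lra.
have sMe : x + s * e - z%:~R = s * (M + e) by rewrite addrAC xzs mulrDr.
by rewrite (@dist_int_norm_le_half _ z) sMe normrM ns mul1r ger0_norm; lra.
Qed.

End DistInt.

Section MinDist.
Context {R : realType} {n : nat} (v : 'I_n -> nat).
Implicit Types (t M s : R).

Lemma min_dist_le t i : min_dist v t <= dist_int (t * (v i)%:R).
Proof. by apply/bigmin_leP; right; exists i. Qed.

Lemma min_dist_ge t M :
  M <= 1 -> (forall i, M <= dist_int (t * (v i)%:R)) -> M <= min_dist v t.
Proof. by move=> M1 Mv; apply/bigmin_geP; split. Qed.

Lemma min_dist_gt t M :
  M < 1 -> (forall i, M < dist_int (t * (v i)%:R)) -> M < min_dist v t.
Proof. by move=> M1 Mv; apply/bigmin_gtP; split. Qed.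

Lemma min_dist_lipschitz s t :
  min_dist v s <= min_dist v t + (\sum_i (v i)%:R) * `|s - t|.
Proof.
set K := \sum_i _; have K0 : 0 <= K by apply: sumr_ge0 => i _; exact: ler0n.
rewrite -lerBlDr; apply: min_dist_ge => [|i].
  have : min_dist v s <= 1 by apply/bigmin_leP; left.
  by have := mulr_ge0 K0 (normr_ge0 (s - t)); lra.
have viK : (v i)%:R <= K.
  by rewrite /K (bigD1 i) //= lerDl; apply: sumr_ge0 => j _; exact: ler0n.
have := dist_int_lipschitz (s * (v i)%:R) (t * (v i)%:R).
rewrite -mulrBl normrM normr_nat ler_norml => /andP[_ st].
have := min_dist_le s i.
have : `|s - t| * (v i)%:R <= K * `|s - t| by rewrite mulrC ler_wpM2r.
lra.
Qed.

Lemma min_dist_continuous : continuous (@min_dist R n v).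
Proof.
pose K : R := \sum_i (v i)%:R; have K0 : 0 < K + 1.
  by have : 0 <= K := sumr_ge0 _ (fun i _ => ler0n _ _); lra.
move=> x; apply/cvgrPdist_lt => e e0.
apply/nbhs_ballP; exists (e / (K + 1)); first exact: divr_gt0.
move=> y; rewrite /ball /= => xy.
have xyK : K * `|x - y| <= (K + 1) * `|x - y| by rewrite ler_wpM2r ?lerDl.
have : (K + 1) * `|x - y| < e by rewrite mulrC -ltr_pdivlMr.
have := min_dist_lipschitz x y; have := min_dist_lipschitz y x.
by rewrite (distrC y) ltr_norml -/K; lra.
Qed.

Lemma min_distDz t (z : int) : min_dist v (t + z%:~R) = min_dist v t.
Proof.
apply: eq_bigr => i _.
by rewrite mulrDl -[z%:~R * _](intrM _ z (v i)%:Z) dist_intDz.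
Qed.

Lemma ML_attained :
  exists c, ML (R:=R) v = min_dist v c /\ forall t, min_dist v t <= min_dist v c.
Proof.
have [c _ cmax] := EVT_max ler01 (continuous_subspaceT min_dist_continuous).
have {}cmax t : min_dist v t <= min_dist v c.
  rewrite -(min_distDz t (- Num.floor t)) intrN; apply: cmax.
  have := floor_le t; have := floorD1_gt t.
  by rewrite in_itv /= intrD; lra.
exists c; split => //; apply/eqP; rewrite eq_le; apply/andP; split.
- by apply: ge_sup => [|_ [t _ <-]]; first by exists (min_dist v c), c.
- apply: sup_upper_bound; last by exists c.
  split; first by exists (min_dist v c), c.
  by exists (min_dist v c) => _ [t _ <-].
Qed.

End MinDist.

Section Maximizer.
Context {R : realType} {n : nat} {v : 'I_n -> nat} {c : R}.
Hypothesis cmax : forall t, min_dist v t <= min_dist v c.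
Local Notation M := (min_dist v c).

Lemma maximizer_pinned s : 0 < M -> M < 1/2 -> s = 1 \/ s = -1 ->
  exists i (z : int), c * (v i)%:R = z%:~R - s * M.
Proof.
move=> M_gt0 M_lthalf s1; apply: contrapT => unpinned.
have push i : exists2 d, 0 < d & forall e, 0 < e -> e <= d ->
    M < dist_int ((c + s * e) * (v i)%:R).
  have vi_gt0 : 0 < (v i)%:R :> R.
    rewrite ltr0n lt0n; apply/negP => /eqP vi0.
    have := dist_int_le_norm (c * (v i)%:R) 0; have := min_dist_le v c i.
    by rewrite vi0 mulr0 subrr normr0 => /le_trans Mle /Mle; rewrite leNgt M_gt0.
  have [|d d0 dM] := dist_int_push _ _ _ s1 M_gt0 M_lthalf (min_dist_le v c i).
    by move=> z; apply/eqP => e; apply: unpinned; exists i, z.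
  exists (d / (v i)%:R) => [|e e0 ed]; first exact: divr_gt0.
  by rewrite mulrDl -mulrA; apply: dM; [exact: mulr_gt0 | rewrite -ler_pdivlMr].
have [d d_gt0 dM] := fin_all_exists2 push.
pose e := \big[Num.min/1]_i d i.
have e_gt0 : 0 < e by apply/bigmin_gtP; split => // i _; apply: d_gt0.
have := cmax (c + s * e); rewrite leNgt => /negP; apply.
apply: min_dist_gt => [|i]; first lra.
by apply: dM => //; apply/bigmin_leP; right; exists i.
Qed.

Lemma maximizer_rational : 0 < M -> M < 1/2 ->
  exists i j (k : int), v i != v j /\ M * (v i + v j)%:R = k%:~R.
Proof.
move=> M_gt0 M_lthalf.
have [i [a ha]] := maximizer_pinned _ M_gt0 M_lthalf (or_introl erefl).
have [j [b hb]] := maximizer_pinned _ M_gt0 M_lthalf (or_intror erefl).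
rewrite mul1r in ha; rewrite mulN1r opprK in hb.
exists i, j, (a * (v j)%:Z - b * (v i)%:Z); split.
  apply/eqP => vij; rewrite vij in ha.
  have ab : (a - b)%:~R = 2 * M :> R by rewrite intrB; lra.
  suff : (0 < (a - b)%:~R :> R) && ((a - b)%:~R < 1 :> R).
    by rewrite ltr0z ltrz1; lia.
  by rewrite ab; apply/andP; split; lra.
rewrite intrB !intrM -!pmulrn natrD.
have -> : a%:~R = c * (v i)%:R + M :> R by lra.
have -> : b%:~R = c * (v j)%:R - M :> R by lra.
ring.
Qed.

End Maximizer.

Lemma int_window_cases {n D : nat} {k : int} : (0 < n)%N -> (D <= 3 * n + 1)%N ->
  n%:Z * k < D%:Z -> D%:Z <= n.+1%:Z * k ->
  exists2 s : nat, (1 <= s <= 3)%N & k * (n * s + 1)%N%:Z = s%:Z * D%:Z.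
Proof.
move=> n_gt0 D_le nk_lt Dnk; have k_gt0 : 0 < k by nia.
have k_le3 : k <= 3 by nia.
have [|[|]] : k = 1 \/ k = 2 \/ k = 3 by lia.
all: move=> kE; subst k.
- by exists 1%N => //; lia.
- have [DE|DE] : D = (2 * n + 1)%N \/ D = (2 * n + 2)%N by lia.
  + by exists 2%N => //; lia.
  + by exists 1%N => //; lia.
- by exists 3%N => //; lia.
Qed.

Lemma window_fraction {R : realType} {n D : nat} {k : int} {M : R} :
  (0 < n)%N -> (0 < D <= 3 * n + 1)%N -> M * D%:R = k%:~R ->
  1 / n.+1%:R <= M -> M < 1 / n%:R ->
  exists2 s : nat, (1 <= s <= 3)%N & M = s%:R / (n%:R * s%:R + 1).
Proof.
move=> n_gt0 /andP[D_gt0 D_le] MD M_ge M_lt.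
have n0 : (0 : R) < n%:R by rewrite ltr0n.
have D0 : (0 : R) < D%:R by rewrite ltr0n.
have Dnk : D%:Z <= n.+1%:Z * k.
  rewrite -(ler_int R) intrM -!pmulrn -MD.
  rewrite ler_pdivrMr // in M_ge.
  by have := ler_wpM2r (ltW D0) M_ge; lra.
have nk_lt : n%:Z * k < D%:Z.
  rewrite -(ltr_int R) intrM -!pmulrn -MD.
  rewrite ltr_pdivlMr // in M_lt.
  have : M * n%:R * D%:R < 1 * D%:R by rewrite ltr_pM2r.
  lra.
have [s s13 ks] := int_window_cases n_gt0 D_le nk_lt Dnk.
have ksR : k%:~R * (n%:R * s%:R + 1) = s%:R * D%:R :> R.
  by rewrite -natrM natr1 -addn1 !pmulrn -!intrM ks.
have ns_gt0 : 0 < n%:R * s%:R + 1 :> R.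
  by rewrite ltr_wpDl ?mulr_ge0.
exists s => //; apply/eqP.
by rewrite -(mulfK (lt0r_neq0 D0) M) MD eqr_div ?lt0r_neq0 // ksR.
Qed.

Theorem proposition11p3 (R : realType) (n : nat) (v : 'I_n -> nat) :
  (2 <= n)%N ->
  (forall i, (0 < v i)%N) ->
  (forall i, ((v i)%:R : R) <= 3 / 2 * n%:R + 1) ->
  ML (R:=R) v < 1 / (n.+1)%:R
  \/ (exists s : nat, (1 <= s <= 3)%N /\ ML (R:=R) v = s%:R / (n%:R * s%:R + 1) :> R)
  \/ 1 / n%:R <= (ML (R:=R) v : R).
Proof.
move=> n_ge2 _ v_le.
have [c [-> cmax]] := ML_attained (R:=R) v.
have [M_lt|M_ge] := ltP (min_dist v c) (1 / n.+1%:R); first by left.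
have [_|M_lt] := leP (1 / n%:R) (min_dist v c); first by right; right.
right; left.
have n_ge2R : (2 : R) <= n%:R by rewrite (ler_nat R 2).
have M_gt0 : 0 < min_dist v c by apply: lt_le_trans M_ge; rewrite divr_gt0.
have M_lthalf : min_dist v c < 1/2.
  apply: lt_le_trans M_lt _.
  by rewrite ler_pdivrMr; lra.
have [i [j [k [vij Mk]]]] := maximizer_rational cmax M_gt0 M_lthalf.
have v2 l : (2 * v l <= 3 * n + 2)%N.
  by rewrite -(ler_nat R) natrD !natrM; have := v_le l; lra.
have n_gt0 : (0 < n)%N by lia.
have vij_le : (0 < v i + v j <= 3 * n + 1)%N.
  by have := v2 i; have := v2 j; move: vij; lia.
have [s s13 Ms] := window_fraction n_gt0 vij_le Mk M_ge M_lt.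
by exists s.
Qed.
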